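(* Let $\mathcal X,\mathcal Y$ be compact convex sets and $\mathcal L:\mathcal X\times\mathcal Y\to\mathbb R$ a differentiable convex-concave function with Lipschitz continuous gradient that is uniformly strongly convex-concave with constants $(\mu_{\mathcal X},\mu_{\mathcal Y})$, with saddle point $(x^*,y^* )$. Then $$M_{XY}\le\sqrt{\frac2{\mu_{\mathcal Y}}}L_{XY}D_{\mathcal X}\quad\text{and}\quad M_{YX}\le\sqrt{\frac2{\mu_{\mathcal X}}}L_{YX}D_{\mathcal Y}.$$
   Context: Norms $\|\cdot\|_{\mathcal X},\|\cdot\|_{\mathcal Y}$ with duals $\|\cdot\|_{\mathcal X^*},\|\cdot\|_{\mathcal Y^*}$; $D_{\mathcal X}:=\sup_{x,x'\in\mathcal X}\|x-x'\|_{\mathcal X}$, similarly $D_{\mathcal Y}$. Uniformly strongly convex-concave: $\mathcal L(\cdot,y)$ is $\mu_{\mathcal X}$-strongly convex for every $y$ and $-\mathcal L(x,\cdot)$ is $\mu_{\mathcal Y}$-strongly convex for every $x$, $\mu_{\mathcal X},\mu_{\mathcal Y}>0$. Saddle point: $\mathcal L(x^*,y)\le\mathcal L(x^*,y^* )\le\mathcal L(x,y^* )$; $\mathcal L^*:=\mathcal L(x^*,y^* )$. Partial Lipschitz constants: $\|\nabla_x\mathcal L(x,y)-\nabla_x\mathcal L(x,y')\|_{\mathcal X^*}\le L_{XY}\|y-y'\|_{\mathcal Y}$ and $\|\nabla_y\mathcal L(x,y)-\nabla_y\mathcal L(x',y)\|_{\mathcal Y^*}\le L_{YX}\|x-x'\|_{\mathcal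 X}$ for all $x,x',y,y'$. Bilinearity coefficients: $M_{XY}:=\sup\langle s-v,\frac{\nabla_x\mathcal L(x,y^* )-\nabla_x\mathcal L(x,y)}{\sqrt{\mathcal L^*-\mathcal L(x^*,y)}}\rangle$ over $y\in\mathcal Y\setminus\{y^*\}$, $x,s,v\in\mathcal X$; $M_{YX}:=\sup\langle s-v,\frac{\nabla_y\mathcal L(x,y)-\nabla_y\mathcal L(x^*,y)}{\sqrt{\mathcal L(x,y^* )-\mathcal L^*}}\rangle$ over $x\in\mathcal X\setminus\{x^*\}$, $y,s,v\in\mathcal Y$. *)

From HB Require Import structures.
From mathcomp Require Import all_boot all_order all_algebra.
From mathcomp Require Import all_classical all_reals all_analysis.
Set Implicit Arguments. Unset Strict Implicit. Unset Printing Implicit Defensive.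
Import Order.TTheory GRing.Theory Num.Theory.
Import numFieldNormedType.Exports.
Local Open Scope classical_set_scope.
Local Open Scope ring_scope.

Section Defs.
Variable R : realType.

Definition pair (n : nat) (g x : 'rV[R]_n) : R := \sum_(i < n) g ord0 i * x ord0 i.

Definition is_norm (n : nat) (N : 'rV[R]_n -> R) : Prop :=
  [/\ forall x, 0 <= N x,
      forall x, N x = 0 -> x = 0,
      forall (a : R) x, N (a *: x) = `|a| * N x
    & forall x y, N (x + y) <= N x + N y].

Definition dual_norm (n : nat) (N : 'rV[R]_n -> R) (g : 'rV[R]_n) : R :=
  sup [set pair g x | x in [set x | N x <= 1]].

Definition diam (n : nat) (N : 'rV[R]_n -> R) (C : set 'rV[R]_n) : R :=
  sup [set N (p.1 - p.2) | p in C `*` C].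

Definition strongly_convex_on (n : nat) (N : 'rV[R]_n -> R) (mu : R)
  (C : set 'rV[R]_n) (f : 'rV[R]_n -> R) : Prop :=
  forall a b (t : R), C a -> C b -> 0 <= t <= 1 ->
    f (t *: a + (1 - t) *: b)
      <= t * f a + (1 - t) * f b - mu / 2 * t * (1 - t) * (N (a - b)) ^+ 2.

Definition grad_x (n m : nat) (L : 'rV[R]_n -> 'rV[R]_m -> R)
  (x : 'rV[R]_n) (y : 'rV[R]_m) : 'rV[R]_n :=
  \row_(i < n) 'D_(delta_mx ord0 i) (fun x' => L x' y) x.

Definition grad_y (n m : nat) (L : 'rV[R]_n -> 'rV[R]_m -> R)
  (x : 'rV[R]_n) (y : 'rV[R]_m) : 'rV[R]_m :=
  \row_(j < m) 'D_(delta_mx ord0 j) (fun y' => L x y') y.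

Definition M_XY (n m : nat) (L : 'rV[R]_n -> 'rV[R]_m -> R)
  (X : set 'rV[R]_n) (Y : set 'rV[R]_m) (xs : 'rV[R]_n) (ys : 'rV[R]_m) : \bar R :=
  ereal_sup [set z : \bar R | exists x y s v,
    [/\ X x, Y y, y != ys, X s /\ X v &
     z = (pair (s - v)
            ((Num.sqrt (L xs ys - L xs y))^-1 *: (grad_x L x ys - grad_x L x y)))%:E]].

Definition M_YX (n m : nat) (L : 'rV[R]_n -> 'rV[R]_m -> R)
  (X : set 'rV[R]_n) (Y : set 'rV[R]_m) (xs : 'rV[R]_n) (ys : 'rV[R]_m) : \bar R :=
  ereal_sup [set z : \bar R | exists x y s v,
    [/\ X x, x != xs, Y y, Y s /\ Y v &
     z = (pair (s - v)
            ((Num.sqrt (L x ys - L xs ys))^-1 *: (grad_y L x y - grad_y L xs y)))%:E]].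
End Defs.

From HB Require Import structures.
From mathcomp Require Import all_boot all_order all_algebra.
From mathcomp Require Import all_classical all_reals all_analysis.
From mathcomp Require Import ring lra.

Set Implicit Arguments.
Unset Strict Implicit.
Unset Printing Implicit Defensive.
Import Order.TTheory GRing.Theory Num.Theory.
Import numFieldNormedType.Exports.
Local Open Scope classical_set_scope.
Local Open Scope ring_scope.

(* Strong concavity of L xs and the
   maximality of ys give the quadratic growth
   L xs ys - L xs y >= mu_Y/2 ||y - ys||^2.  On the other hand the duality
   inequality and the partial Lipschitz bound give
   <s - v, grad_x L x ys - grad_x L x y> <= D_X L_XY ||y - ys||, and dividing
   by the square root of the growth bound leaves sqrt(2/mu_Y) L_XY D_X.  The
   bound on M_YX is the same argument with the roles of x and y exchanged. *)

Section Pairing.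
Variables (R : realType) (n : nat).
Implicit Types g x : 'rV[R]_n.

Lemma pairC g x : pair g x = pair x g.
Proof. by apply: eq_bigr => i _; rewrite mulrC. Qed.

Lemma pairZr g x a : pair g (a *: x) = a * pair g x.
Proof. by rewrite /pair mulr_sumr; apply: eq_bigr => i _; rewrite mxE; ring. Qed.

Lemma pairr0 g : pair g 0 = 0.
Proof. by rewrite /pair big1 // => i _; rewrite mxE mulr0. Qed.

Lemma coord_le_mx_norm x i : `|x ord0 i| <= `|x|.
Proof.
change `|x| with (mx_norm x); rewrite mx_normrE.
exact: (le_trans _ (le_bigmax _ _ (ord0, i))).
Qed.

Lemma pair_le_mx_norm g x : pair g x <= (\sum_i `|g ord0 i|) * `|x|.
Proof.
rewrite /pair mulr_suml; apply: ler_sum => i _.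
apply: le_trans (ler_norm _) _; rewrite normrM.
by apply: ler_wpM2l; last exact: coord_le_mx_norm.
Qed.

End Pairing.

Section IsNorm.
Variables (R : realType) (n : nat) (N : 'rV[R]_n -> R).
Implicit Types g x y : 'rV[R]_n.
Hypothesis normN : is_norm N.

Lemma isnorm_ge0 x : 0 <= N x.
Proof. by case: normN. Qed.

Lemma isnorm_eq0 x : N x = 0 -> x = 0.
Proof. by case: normN => _ + _ _; apply. Qed.

Lemma isnormZ a x : N (a *: x) = `|a| * N x.
Proof. by case: normN. Qed.

Lemma isnormD x y : N (x + y) <= N x + N y.
Proof. by case: normN. Qed.

Lemma isnorm0 : N 0 = 0.
Proof. by rewrite -(scale0r 0) isnormZ normr0 mul0r. Qed.

Lemma isnormN x : N (- x) = N x.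
Proof. by rewrite -scaleN1r isnormZ normrN normr1 mul1r. Qed.

Lemma isnormB x y : N (x - y) = N (y - x).
Proof. by rewrite -isnormN opprB. Qed.

Lemma isnorm_gt0 x : x != 0 -> 0 < N x.
Proof.
move=> x0; rewrite lt_neqAle isnorm_ge0 andbT.
by apply: contra_neq x0 => /esym /isnorm_eq0.
Qed.

Lemma isnorm_dist x y : `|N x - N y| <= N (x - y).
Proof.
have := isnormD (x - y) y; have := isnormD (y - x) x.
rewrite !subrK isnormB ler_norml => ? ?; apply/andP; split; lra.
Qed.

Lemma isnorm_sum (I : finType) (f : I -> 'rV[R]_n) :
  N (\sum_i f i) <= \sum_i N (f i).
Proof.
apply: (big_ind2 (fun a b => N a <= b)); first by rewrite isnorm0.
  by move=> a b a' b' ? ?; apply: le_trans (isnormD _ _) _; exact: lerD.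
by [].
Qed.

Lemma isnorm_le_mx_norm : exists2 K, 0 <= K & forall x, N x <= K * `|x|.
Proof.
exists (\sum_(i < n) N (delta_mx ord0 i)).
  by apply: sumr_ge0 => i _; exact: isnorm_ge0.
move=> x; rewrite {1}[x]row_sum_delta.
apply: le_trans (isnorm_sum (fun j => x 0 j *: delta_mx 0 j)) _.
rewrite mulr_suml; apply: ler_sum => i _.
rewrite isnormZ mulrC; apply: ler_wpM2l; first exact: isnorm_ge0.
exact: coord_le_mx_norm.
Qed.

Lemma continuous_isnorm : continuous N.
Proof.
have [K K0 NK] := isnorm_le_mx_norm.
move=> x; apply/(@cvgrPdist_le _ _ _ _ (nbhs_filter x)) => e e0.
have eK : 0 < e / (K + 1) by rewrite divr_gt0 //; lra.
apply: (proj2 (@nbhs_normP R [the pseudoMetricNormedZmodType R of 'rV[R]_n] x _)).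
exists (e / (K + 1)) => //= t; rewrite /ball_ /= ltr_pdivlMr; last lra.
move=> xt; apply: le_trans (isnorm_dist x t) _; apply: le_trans (NK _) _.
have : K * `|x - t| <= `|x - t| * (K + 1).
  by rewrite mulrDr mulr1 mulrC lerDl.
lra.
Qed.

(* N attains a positive minimum on the compact unit sphere of the sup norm. *)
Lemma mx_norm_le_isnorm : exists2 c, 0 < c & forall x, c * `|x| <= N x.
Proof.
pose S := [set x : 'rV[R]_n | `|x| = 1].
have compactS : compact S.
  apply: bounded_closed_compact.
    exists 1; split; first exact: num_real.
    by move=> M M1 x /= ->; exact: ltW.
  have -> : S = (fun x : 'rV[R]_n => `|x|) @^-1` [set 1] by [].
  apply: (proj1 (continuous_closedP _)); first exact: norm_continuous.
  exact: closed_eq.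
have normalizedS x : x != 0 -> S (`|x|^-1 *: x).
  by move=> x0; rewrite /S /= normrZ normfV normr_id mulVf // normr_eq0.
have [S0|S0] := pselect (S !=set0); last first.
  exists 1 => // x; have [->|x0] := eqVneq x 0.
    by rewrite normr0 mulr0 isnorm_ge0.
  by exfalso; apply: S0; exists (`|x|^-1 *: x); exact: normalizedS.
have [c /set_mem Sc Nc_min] :=
  compact_EVT_min S0 compactS (continuous_subspaceT continuous_isnorm).
have c0 : c != 0.
  apply: contraPneq Sc => ->; rewrite /S /= normr0 => /eqP.
  by rewrite eq_sym oner_eq0.
exists (N c); first exact: isnorm_gt0.
move=> x; have [->|x0] := eqVneq x 0; first by rewrite normr0 mulr0 isnorm_ge0.
have := Nc_min _ (mem_set (normalizedS x x0)).
by rewrite isnormZ normfV normr_id ler_pdivlMl ?normr_gt0 // mulrC.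
Qed.

Lemma has_sup_dual_norm g :
  has_sup [set pair g x | x in [set x | N x <= 1]].
Proof.
have [c c0 cN] := mx_norm_le_isnorm.
split; first by exists (pair g 0), 0 => //=; rewrite isnorm0.
exists ((\sum_i `|g ord0 i|) / c) => _ [x /= Nx1 <-].
apply: le_trans (pair_le_mx_norm g x) _.
rewrite ler_wpM2l ?sumr_ge0 //.
by rewrite -(ler_pM2l c0) mulfV ?gt_eqF //; exact: le_trans (cN x) Nx1.
Qed.

Lemma dual_norm_ge0 g : 0 <= dual_norm N g.
Proof.
rewrite -(pairr0 g); apply: sup_upper_bound; first exact: has_sup_dual_norm.
by exists 0; rewrite //= isnorm0.
Qed.

Lemma pair_le_dual_norm g x : pair g x <= dual_norm N g * N x.
Proof.
have [->|x0] := eqVneq x 0; first by rewrite isnorm0 mulr0 pairr0.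
have Nx0 := isnorm_gt0 x0.
have : pair g ((N x)^-1 *: x) <= dual_norm N g.
  apply: sup_upper_bound; first exact: has_sup_dual_norm.
  exists ((N x)^-1 *: x) => //=.
  by rewrite isnormZ ger0_norm ?invr_ge0 ?isnorm_ge0 // mulVf // gt_eqF.
by rewrite pairZr ler_pdivrMl // mulrC.
Qed.

Lemma isnorm_le_diam (X : set 'rV[R]_n) s v : compact X -> X s -> X v ->
  N (s - v) <= diam N X.
Proof.
move=> cX Xs Xv.
have [K K0 NK] := isnorm_le_mx_norm.
have [M [_ XM]] := compact_bounded cX.
have XM1 x : X x -> `|x| <= `|M| + 1.
  move=> Xx; apply: (XM (`|M| + 1)) => //.
  by apply: le_lt_trans (ler_norm _) _; lra.
apply: sup_upper_bound; last by exists (s, v).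
split; first by exists (N (s - v)), (s, v).
exists (K * (2 * (`|M| + 1))) => _ [[a b] [/= Xa Xb] <-].
apply: le_trans (NK _) _; rewrite ler_wpM2l //.
by apply: le_trans (ler_normB _ _) _; have := XM1 a Xa; have := XM1 b Xb; lra.
Qed.

Lemma diam_ge0 (X : set 'rV[R]_n) s : compact X -> X s -> 0 <= diam N X.
Proof. by move=> cX Xs; rewrite -isnorm0 -(subrr s) isnorm_le_diam. Qed.

End IsNorm.

Lemma le_of_forall_shrunk_le (R : realFieldType) (a b : R) :
  (forall t, 0 < t <= 1 -> (1 - t) * b <= a) -> b <= a.
Proof.
move=> shrunk.
have a0 : 0 <= a by have := shrunk 1; rewrite ltr01 lexx subrr mul0r; apply.
rewrite leNgt; apply/negP => ab.
pose t := (b - a) / (2 * b).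
have t0 : 0 < t by rewrite divr_gt0 //; lra.
have t1 : t <= 1 by rewrite ler_pdivrMr; lra.
have tb : t * b = (b - a) / 2 by rewrite /t; field; rewrite gt_eqF //; lra.
by have := shrunk t; rewrite t0 t1 mulrBl mul1r tb => /(_ isT); lra.
Qed.

Lemma strongly_convex_quadratic_growth (R : realType) (n : nat)
    (N : 'rV[R]_n -> R) (mu : R) (C : set 'rV[R]_n) (f : 'rV[R]_n -> R) z y :
  convex_set C -> strongly_convex_on N mu C f ->
  C z -> (forall w, C w -> f z <= f w) -> C y ->
  mu / 2 * N (y - z) ^+ 2 <= f y - f z.
Proof.
(* Comparing f z with f at t y + (1 - t) z gives the bound up to a factor
   1 - t, for every t in (0, 1]. *)
move=> convC sconv_f Cz f_min Cy.
apply: le_of_forall_shrunk_le => t /andP[t0 t1].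
have Cyz : C (t *: y + (1 - t) *: z).
  have := convC y z (Itv01 (ltW t0) t1) (mem_set Cy) (mem_set Cz).
  by rewrite inE.
have := f_min _ Cyz; have := sconv_f y z t Cy Cz.
rewrite (ltW t0) t1 => /(_ isT) convex_ineq min_ineq.
rewrite -(ler_pM2l t0).
have -> : t * ((1 - t) * (mu / 2 * N (y - z) ^+ 2))
  = mu / 2 * t * (1 - t) * N (y - z) ^+ 2 by ring.
lra.
Qed.

Lemma ratio_le_of_quadratic_growth (R : realType) (mu gap d c p : R) :
  0 < mu -> 0 < d -> mu / 2 * d ^+ 2 <= gap -> 0 <= c -> p <= c * d ->
  (Num.sqrt gap)^-1 * p <= Num.sqrt (2 / mu) * c.
Proof.
move=> mu0 d0 growth c0 pcd.
have [p_le0|p_gt0] := lerP p 0.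
  apply: (@le_trans _ _ 0); last by rewrite mulr_ge0 ?sqrtr_ge0.
  by rewrite mulr_ge0_le0 // invr_ge0 sqrtr_ge0.
pose q := Num.sqrt (mu / 2).
have q0 : 0 < q by rewrite sqrtr_gt0 divr_gt0.
have sqrt2mu : Num.sqrt (2 / mu) = q^-1.
  by rewrite -sqrtrV ?invf_div // divr_ge0 // ltW.
have qd_le : q * d <= Num.sqrt gap.
  rewrite -[d]ger0_norm ?(ltW d0) // -sqrtr_sqr -sqrtrM ?ler_wsqrtr //.
  by rewrite divr_ge0 // ltW.
have qd0 : 0 < q * d by rewrite mulr_gt0.
apply: (@le_trans _ _ ((q * d)^-1 * p)).
  by rewrite ler_wpM2r ?(ltW p_gt0) // lef_pV2 ?posrE // (lt_le_trans qd0).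
apply: (@le_trans _ _ ((q * d)^-1 * (c * d))).
  by rewrite ler_wpM2l // invr_ge0 ltW.
by rewrite sqrt2mu le_eqVlt; apply/orP; left; apply/eqP; field; rewrite !gt_eqF.
Qed.

Lemma bilinearity_term_le (R : realType) (n m : nat)
    (NS : 'rV[R]_n -> R) (NC : 'rV[R]_m -> R) (S : set 'rV[R]_n) (C : set 'rV[R]_m)
    (f : 'rV[R]_m -> R) (mu Lc : R) (z w : 'rV[R]_m) (g s v : 'rV[R]_n) :
  is_norm NS -> is_norm NC -> compact S -> convex_set C -> 0 < mu ->
  strongly_convex_on NC mu C f -> C z -> (forall u, C u -> f z <= f u) ->
  C w -> w != z -> dual_norm NS g <= Lc * NC (w - z) -> S s -> S v ->
  pair (s - v) ((Num.sqrt (f w - f z))^-1 *: g)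
    <= Num.sqrt (2 / mu) * Lc * diam NS S.
Proof.
move=> normNS normNC compS convC mu0 sconv_f Cz f_min Cw wz g_le Ss Sv.
have dist_gt0 : 0 < NC (w - z) by apply: isnorm_gt0; rewrite // subr_eq0.
have Lc0 : 0 <= Lc.
  by rewrite -(pmulr_lge0 _ dist_gt0); exact: le_trans (dual_norm_ge0 _ _) g_le.
rewrite pairZr pairC -mulrA.
apply: (ratio_le_of_quadratic_growth mu0 dist_gt0).
- exact: strongly_convex_quadratic_growth sconv_f Cz f_min Cw.
- by rewrite mulr_ge0 // (diam_ge0 normNS compS Ss).
- apply: le_trans (pair_le_dual_norm normNS g (s - v)) _.
  rewrite mulrAC; apply: ler_pM => //; first exact: dual_norm_ge0.
    exact: isnorm_ge0.
  exact: isnorm_le_diam.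
Qed.

Theorem proposition13 (R : realType) (n m : nat)
  (NX : 'rV[R]_n -> R) (NY : 'rV[R]_m -> R)
  (X : set 'rV[R]_n) (Y : set 'rV[R]_m)
  (L : 'rV[R]_n -> 'rV[R]_m -> R)
  (muX muY LXY LYX : R) (xs : 'rV[R]_n) (ys : 'rV[R]_m) :
  is_norm NX -> is_norm NY ->
  compact X -> convex_set X -> compact Y -> convex_set Y ->
  (* L is differentiable (jointly) at every point of X x Y *)
  (forall x y, X x -> Y y ->
     differentiable (fun p : 'rV[R]_n * 'rV[R]_m => L p.1 p.2) (x, y)) ->
  (* the gradient of L is Lipschitz continuous on X x Y *)
  (exists Lg : R, forall x x' y y', X x -> X x' -> Y y -> Y y' ->
     dual_norm NX (grad_x L x y - grad_x L x' y')
       + dual_norm NY (grad_y L x y - grad_y L x' y')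
     <= Lg * (NX (x - x') + NY (y - y'))) ->
  (* uniform strong convexity-concavity *)
  0 < muX -> 0 < muY ->
  (forall y, Y y -> strongly_convex_on NX muX X (fun x => L x y)) ->
  (forall x, X x -> strongly_convex_on NY muY Y (fun y => - L x y)) ->
  (* saddle point *)
  X xs -> Y ys ->
  (forall x y, X x -> Y y -> L xs y <= L xs ys /\ L xs ys <= L x ys) ->
  (* partial Lipschitz constants *)
  (forall x y y', X x -> Y y -> Y y' ->
     dual_norm NX (grad_x L x y - grad_x L x y') <= LXY * NY (y - y')) ->
  (forall x x' y, X x -> X x' -> Y y ->
     dual_norm NY (grad_y L x y - grad_y L x' y) <= LYX * NX (x - x')) ->
  (M_XY L X Y xs ys <= (Num.sqrt (2 / muY) * LXY * diam NX X)%:E)%E /\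
  (M_YX L X Y xs ys <= (Num.sqrt (2 / muX) * LYX * diam NY Y)%:E)%E.
Proof.
move=> normNX normNY compX convX compY convY _ _ muX0 muY0 sconvX sconcY
  Xxs Yys saddle gradx_lip grady_lip.
split; apply: ge_ereal_sup.
- move=> _ [x [y [s [v [Xx Yy yys [Xs Xv] ->]]]]].
  rewrite lee_fin (_ : L xs ys - L xs y = - L xs y - - L xs ys); last first.
    by rewrite opprK addrC.
  apply: (bilinearity_term_le normNX normNY compX convY muY0 (sconcY xs Xxs)) => //.
  + by move=> u Yu; rewrite lerN2; case: (saddle xs u Xxs Yu).
  + by rewrite (isnormB normNY); exact: gradx_lip.
- move=> _ [x [y [s [v [Xx xxs Yy [Ys Yv] ->]]]]].
  rewrite lee_fin.
  apply: (bilinearity_term_le normNY normNX compY convX muX0 (sconvX ys Yys)) => //.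
  + by move=> u Xu; case: (saddle u ys Xu Yys).
  + exact: grady_lip.
Qed.
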